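(* Let $q$ be a power of an odd prime, $c\in\mathbb{F}_q^*$, $b\in\mathbb{F}_q$ a nonsquare, $\beta\in\mathbb{F}_{q^2}$ with $\beta^2=b$, and $f(X)=c(X^{q+1}+X^2)$ on $\mathbb{F}_{q^2}$. If $\alpha\in\beta\mathbb{F}_q=\{y\beta: y\in\mathbb{F}_q\}$, then the number of $\gamma\in\mathbb{F}_{q^2}$ with $f(\gamma)=\alpha$ is $q$ if $\alpha=0$ and $0$ if $\alpha\neq0$. *)

From mathcomp Require Import all_boot all_algebra all_field.
Set Implicit Arguments. Unset Strict Implicit. Unset Printing Implicit Defensive.
Import GRing.Theory.
Local Open Scope ring_scope.

(* Elements of the subfield F_q of a finite field L with #|L| = q^2:
   the fixed points of the q-power Frobenius. *)
Definition inFq (L : finFieldType) (q : nat) (x : L) : bool := x ^+ q == x.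

Definition fpoly (L : finFieldType) (q : nat) (c x : L) : L :=
  c * (x ^+ q.+1 + x ^+ 2).

From mathcomp Require Import all_boot all_algebra all_field.
Set Implicit Arguments.
Unset Strict Implicit.
Unset Printing Implicit Defensive.

Import GRing.Theory.
Local Open Scope ring_scope.

(* Write q = p^k and T(g) = g^q + g for the trace of F_{q^2} over F_q, so that
   f(g) = c g T(g) with c and T(g) in F_q, while alpha in beta F_q means
   alpha^q = -alpha.  Applying the Frobenius to f(g) = alpha gives
   c g^q T(g) = - c g T(g), i.e. c T(g)^2 = 0; hence T(g) = 0 and alpha = 0.
   For alpha = 0 the solutions are exactly the kernel of T.  This kernel has
   q elements: at most q because they are roots of X^q + X, and at least q
   because T is additive with image in F_q, which has at most q elements, so
   q^2 = #|L| <= q #|ker T|. *)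

Lemma card_fibre_le_kernel (U : finZmodType) (V : zmodType) (f : U -> V) :
  {morph f : x y / x + y} ->
  forall v, (#|[set u | f u == v]| <= #|[set u | f u == 0%R]|)%N.
Proof.
move=> fD v; case: (pickP [pred u | f u == v]) => [u0 /eqP fu0 | fibre0].
  apply: leq_trans (leq_imset_card (+%R^~ u0) _).
  apply/subset_leq_card/subsetP => u; rewrite inE => /eqP fu.
  apply/imsetP; exists (u - u0); last by rewrite subrK.
  by rewrite inE; apply/eqP/(addIr (f u0)); rewrite -fD subrK fu fu0 add0r.
suff -> : [set u | f u == v] = set0 by rewrite cards0.
by apply/setP => u; rewrite !inE; apply: fibre0.
Qed.

Lemma card_le_image_mul_kernel (U V : finZmodType) (f : U -> V) (S : {set V}) :
  {morph f : x y / x + y} -> (forall u, f u \in S) ->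
  (#|U| <= #|S| * #|[set u | f u == 0%R]|)%N.
Proof.
move=> fD fS; rewrite -[#|U|]sum1_card (partition_big f (mem S)) //=.
rewrite -sum_nat_const; apply: leq_sum => v _.
by rewrite sum1dep_card card_fibre_le_kernel.
Qed.

Lemma card_roots_Xn_scale (F : finFieldType) (q : nat) (s : F) : (1 < q)%N ->
  (#|[set x : F | (x ^+ q == s * x)%R]| <= q)%N.
Proof.
move=> q_gt1; set P : {poly F} := 'X^q - s *: 'X.
have sizeP : size P = q.+1.
  rewrite size_polyDl ?size_polyXn // size_polyN.
  by rewrite (leq_ltn_trans (size_scale_leq _ _)) // size_polyX ltnS.
rewrite cardE -ltnS -sizeP max_poly_roots ?enum_uniq //.
  by rewrite -size_poly_eq0 sizeP.
by apply/allP => x; rewrite mem_enum inE /root !hornerE subr_eq0.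
Qed.

Lemma expr_sqrt_nonsquare (L : finFieldType) (q : nat) (b beta : L) :
  inFq q b -> ~ (exists y : L, inFq q y /\ y ^+ 2 = b) -> beta ^+ 2 = b ->
  beta ^+ q = - beta.
Proof.
move=> /eqP bq b_nonsq beta2.
have : (beta ^+ q - beta) * (beta ^+ q + beta) == 0.
  by rewrite -subr_sqr -exprM mulnC exprM beta2 bq subrr.
rewrite mulf_eq0 subr_eq0 addr_eq0 => /orP [/eqP beta_q | /eqP //].
by case: b_nonsq; exists beta; rewrite /inFq beta_q.
Qed.

Section QuadraticExtension.

Variables (L : finFieldType) (q : nat).
Hypotheses (pcharLq : [pchar L].-nat q) (cardL : #|L| = (q ^ 2)%N).

Lemma expr_qK (x : L) : (x ^+ q) ^+ q = x.
Proof. by rewrite -exprM mulnn -cardL expf_card. Qed.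

Lemma inFq_trace (x : L) : inFq q (x ^+ q + x).
Proof. by rewrite /inFq exprDn_pchar // expr_qK addrC. Qed.

Lemma card_trace_kernel : (1 < q)%N -> #|[set x : L | x ^+ q == - x]| = q.
Proof.
move=> q_gt1; set tr := fun x : L => x ^+ q + x.
have -> : [set x : L | x ^+ q == - x] = [set x | tr x == 0].
  by apply/setP => x; rewrite !inE addr_eq0.
apply/eqP; rewrite eqn_leq; apply/andP; split.
  have -> : [set x | tr x == 0] = [set x | x ^+ q == -1 * x].
    by apply/setP => x; rewrite !inE mulN1r addr_eq0.
  exact: card_roots_Xn_scale.
have trD : {morph tr : x y / x + y}.
  by move=> x y; rewrite /tr exprDn_pchar // addrACA.
have trFq x : tr x \in [set y | inFq q y] by rewrite inE inFq_trace.
have card_Fq : (#|[set y : L | inFq q y]| <= q)%N.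
  have -> : [set y : L | inFq q y] = [set y | y ^+ q == 1 * y].
    by apply/setP => y; rewrite !inE mul1r.
  exact: card_roots_Xn_scale.
have := card_le_image_mul_kernel trD trFq; rewrite cardL -mulnn => le_qq.
rewrite -(leq_pmul2l (ltnW q_gt1)) (leq_trans le_qq) // leq_mul2r card_Fq.
by rewrite orbT.
Qed.

Lemma fpoly_eq_antifixed (c alpha g : L) :
  alpha ^+ q = - alpha -> inFq q c -> c != 0 ->
  (fpoly q c g == alpha) = (alpha == 0) && (g ^+ q == - g).
Proof.
move=> alpha_q /eqP c_q c0; rewrite -addr_eq0; set t := g ^+ q + g.
have /eqP t_q : inFq q t := inFq_trace g.
have fpolyE : fpoly q c g = c * g * t.
  by rewrite /fpoly /t exprS expr2 -mulrDr mulrA.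
have [t0 | t0] := eqVneq t 0; first by rewrite fpolyE t0 mulr0 eq_sym andbT.
rewrite andbF; apply/negP => /eqP f_alpha.
have : fpoly q c g ^+ q = - fpoly q c g by rewrite f_alpha.
rewrite fpolyE !exprMn c_q t_q => frob_eq.
suff : c * t * t == 0 by rewrite !mulf_eq0 (negbTE c0) orbb (negbTE t0).
by rewrite {1}/t (mulrDr c) mulrDl frob_eq addNr.
Qed.

End QuadraticExtension.

Theorem theorem15 (p k : nat) (L : finFieldType)
  (hp : prime p) (hodd : odd p) (hk : (0 < k)%N)
  (hL : #|L| = ((p ^ k) ^ 2)%N)
  (c b beta alpha : L)
  (hc : inFq (p ^ k) c) (hc0 : c != 0)
  (hb : inFq (p ^ k) b)
  (hbns : ~ exists y : L, inFq (p ^ k) y /\ y ^+ 2 = b)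
  (hbeta : beta ^+ 2 = b)
  (halpha : exists y : L, inFq (p ^ k) y /\ alpha = y * beta) :
  #|[set g : L | fpoly (p ^ k) c g == alpha]| =
    (if alpha == 0 then (p ^ k)%N else 0%N).
Proof.
set q := (p ^ k)%N.
have q_gt1 : (1 < q)%N by rewrite -(expn0 p) ltn_exp2l // prime_gt1.
have pcharLq : [pchar L].-nat q.
  have pcharLp : p \in [pchar L].
    by apply: (card_finPcharP (n := (k * 2)%N)); rewrite // hL expnM.
  by rewrite pnatX (eq_pnat _ (pcharf_eq pcharLp)) pnat_id.
have alpha_q : alpha ^+ q = - alpha.
  case: halpha => y [/eqP y_q ->].
  by rewrite exprMn y_q (expr_sqrt_nonsquare hb hbns hbeta) mulrN.
under eq_finset => g do rewrite (fpoly_eq_antifixed pcharLq hL g alpha_q hc hc0).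
case: eqP => _; first exact: card_trace_kernel.
by apply/eqP; rewrite cards_eq0; apply/eqP/setP => g; rewrite !inE.
Qed.
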